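(* Let $G$ be a finite simple graph with $n$ vertices. Then there exists a sequence of distinct vertices $v_1,\dots,v_n$ of $G$ with the following property. Define $G_0:=G$ and $G_k:=G_{k-1}-v_k$ (the graph obtained by deleting the vertex $v_k$ and its incident edges) for $1\le k\le n$. Then $\nu(G_k)=\nu(G)-k$ for all $k<\nu(G)$, and $\nu(G_k)=0$ for all $k\ge \nu(G)$.
   Context: For a finite simple graph $G$ with vertex set $\{v_1,\dots,v_n\}$, the closed adjacency matrix $N(G)$ is the $n\times n$ matrix over $\mathbb{Z}_2$ whose $(i,j)$ entry is $1$ iff $i=j$ or $v_i$ is adjacent to $v_j$. The nullity of $G$ is $\nu(G):=\dim \operatorname{Ker}(N(G))$ over $\mathbb{Z}_2$. By convention, the graph with no vertices $K_0$ has $\nu(K_0)=0$. *)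

From HB Require Import structures.
From mathcomp Require Import all_boot all_order all_algebra.
Set Implicit Arguments. Unset Strict Implicit. Unset Printing Implicit Defensive.
Import GRing.Theory.
Local Open Scope ring_scope.

Definition simple_graph (T : finType) (e : rel T) : Prop :=
  symmetric e /\ irreflexive e.

(* Closed adjacency matrix over Z_2 of the induced subgraph G[S]
   (vertices of S enumerated via enum_val). *)
Definition closed_adj (T : finType) (e : rel T) (S : {set T}) : 'M['F_2]_#|S| :=
  \matrix_(i, j) (if (i == j) || e (enum_val i) (enum_val j) then 1 else 0).

Definition nullity (T : finType) (e : rel T) (S : {set T}) : nat :=
  \rank (kermx (closed_adj e S)).

Definition remaining (T : finType) (s : seq T) (k : nat) : {set T} :=
  [set x | x \notin take k s].

From mathcomp Require Import all_boot all_order all_algebra zify.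
Set Implicit Arguments. Unset Strict Implicit. Unset Printing Implicit Defensive.
Import GRing.Theory.
Local Open Scope ring_scope.

(* Write B_S for the principal submatrix on S of the closed adjacency matrix,
   so that nu(G[S]) = |S| - rank B_S.  It suffices that every nonempty S has a
   vertex t with nu(G[S - t]) = nu(G[S]) - 1 (truncated at 0): deleting such
   vertices one after the other gives the sequence.
   If B_S is singular, take t in the support of a kernel vector: its row and
   column depend on the others, so deleting t keeps the rank.
   If B_S is invertible, then so is B_(S - t) as soon as the diagonal entry
   at t of Y = B_S^-1 is nonzero.  Such a t exists: over a field of
   characteristic 2 the quadratic form of a symmetric matrix with unit
   diagonal is y |-> (sum_i y_i)^2, and Y = Y A Y^T shows that a zero
   diagonal would force Y 1 = 0. *)

Section PrincipalSubmatrix.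
Variables (F : fieldType) (n : nat).
Implicit Types (S : {set 'I_n}) (A : 'M[F]_n).

(* Principal submatrices are kept at full size, as D_S A D_S with D_S the
   diagonal 0/1 matrix of S, which avoids reindexing by 'I_#|S|. *)
Definition idmx_on S : 'M[F]_n := diag_mx (\row_i (i \in S)%:R).

Definition prinmx A S := idmx_on S *m A *m idmx_on S.

Lemma idmx_onE S i j : idmx_on S i j = ((i \in S) && (i == j))%:R.
Proof. by rewrite !mxE; case: (i \in S); case: (i == j). Qed.

Lemma tr_idmx_on S : (idmx_on S)^T = idmx_on S.
Proof. exact: tr_diag_mx. Qed.

Lemma mul_idmx_on_mx S m (M : 'M[F]_(n, m)) i j :
  (idmx_on S *m M) i j = if i \in S then M i j else 0.
Proof. by rewrite mul_diag_mx !mxE; case: (i \in S); rewrite ?mul1r ?mul0r. Qed.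

Lemma mul_mx_idmx_on S m (M : 'M[F]_(m, n)) i j :
  (M *m idmx_on S) i j = if j \in S then M i j else 0.
Proof. by rewrite mul_mx_diag !mxE; case: (j \in S); rewrite ?mulr1 ?mulr0. Qed.

Lemma idmx_onM S S' : idmx_on S *m idmx_on S' = idmx_on (S :&: S').
Proof. by apply/matrixP=> i j; rewrite mul_idmx_on_mx !idmx_onE inE; case: (i \in S). Qed.

Lemma idmx_on_id S : idmx_on S *m idmx_on S = idmx_on S.
Proof. by rewrite idmx_onM setIid. Qed.

Lemma idmx_onC S : idmx_on S + idmx_on (~: S) = 1%:M.
Proof.
apply/matrixP=> i j; rewrite [LHS]mxE !idmx_onE inE mxE.
by case: (i \in S); rewrite /= ?addr0 ?add0r.
Qed.

Lemma sub_idmx_onP S m (M : 'M[F]_(m, n)) :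
  reflect (M *m idmx_on S = M) (M <= idmx_on S)%MS.
Proof.
apply: (iffP idP) => [/submxP[N ->] | <-]; last exact: submxMl.
by rewrite -mulmxA idmx_on_id.
Qed.

Lemma idmx_on_prinmx A S : idmx_on S *m prinmx A S = prinmx A S.
Proof. by rewrite /prinmx !mulmxA idmx_on_id. Qed.

Lemma prinmx_idmx_on A S : prinmx A S *m idmx_on S = prinmx A S.
Proof. by rewrite /prinmx -mulmxA idmx_on_id. Qed.

Lemma trmx_prinmx A S : (prinmx A S)^T = prinmx A^T S.
Proof. by rewrite /prinmx !trmx_mul tr_idmx_on mulmxA. Qed.

Lemma prinmx_prinmx A S S' : prinmx (prinmx A S) S' = prinmx A (S' :&: S).
Proof.
by rewrite /prinmx !mulmxA idmx_onM -(mulmxA _ (idmx_on S)) idmx_onM setIC.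
Qed.

Lemma sub_prinmx_idmx_on A S : (prinmx A S <= idmx_on S)%MS.
Proof. exact: submxMl. Qed.

Lemma mxrank_prinmxS A S S' :
  S' \subset S -> (\rank (prinmx A S') <= \rank (prinmx A S))%N.
Proof.
move/setIidPl=> <-; rewrite -prinmx_prinmx.
by rewrite (leq_trans (mxrankM_maxl _ _)) // mxrankM_maxr.
Qed.

End PrincipalSubmatrix.

Section SelectionMatrix.
Variables (F : fieldType) (U : finType) (n : nat) (g : 'I_n -> U) (h : U -> 'I_n).
Hypotheses (gK : cancel g h) (hK : cancel h g).
Variable S : {set U}.

Definition selmx : 'M[F]_(#|S|, n) := \matrix_(k, i) (enum_val k == g i)%:R.

Lemma selmx_sum k (f : 'I_n -> F) : \sum_i selmx k i * f i = f (h (enum_val k)).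
Proof.
rewrite (bigD1 (h (enum_val k))) //= big1 ?addr0 => [|i ne_i].
  by rewrite mxE hK eqxx mul1r.
rewrite mxE; case: eqP => [ki | _]; last by rewrite mul0r.
by rewrite ki gK eqxx in ne_i.
Qed.

Lemma selmx_trmx : selmx *m selmx^T = 1%:M.
Proof.
apply/matrixP=> k l; rewrite !mxE.
under eq_bigr => i _ do rewrite [selmx^T _ _]mxE.
by rewrite selmx_sum mxE hK (inj_eq enum_val_inj) eq_sym.
Qed.

Lemma trmx_selmx : selmx^T *m selmx = idmx_on F (g @^-1: S).
Proof.
apply/matrixP=> i j; rewrite idmx_onE !mxE inE.
under eq_bigr => k _ do rewrite !mxE.
case: (boolP (g i \in S)) => Si /=.
  rewrite (bigD1 (enum_rank_in Si (g i))) //= big1 ?addr0 => [|k ne_k].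
    by rewrite enum_rankK_in // eqxx mul1r (can_eq gK).
  case: eqP => [ki | _]; last by rewrite mul0r.
  by rewrite -{1}(enum_valK_in Si k) ki eqxx in ne_k.
rewrite big1 // => k _; case: eqP => [ki | _]; last by rewrite mul0r.
by rewrite -ki enum_valP in Si.
Qed.

Lemma mxrank_selmx_conj (M : 'M[F]_n) :
  \rank (selmx *m M *m selmx^T) = \rank (prinmx M (g @^-1: S)).
Proof.
set P := selmx; have PPt := selmx_trmx; have PtP := trmx_selmx.
apply/eqP; rewrite eqn_leq; apply/andP; split.
  have -> : P *m M *m P^T = P *m prinmx M (g @^-1: S) *m P^T.
    by rewrite /prinmx -PtP !mulmxA PPt mul1mx -!mulmxA PPt mulmx1.
  by rewrite (leq_trans (mxrankM_maxl _ _)) // mxrankM_maxr.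
have -> : prinmx M (g @^-1: S) = P^T *m (P *m M *m P^T) *m P.
  by rewrite /prinmx -PtP !mulmxA.
by rewrite (leq_trans (mxrankM_maxl _ _)) // mxrankM_maxr.
Qed.

End SelectionMatrix.

Lemma mxrank_idmx_on (F : fieldType) n (S : {set 'I_n}) : \rank (idmx_on F S) = #|S|.
Proof.
have idK : cancel (@id 'I_n) id by [].
have := mxrank_selmx_conj idK idK S (1%:M : 'M[F]_n).
rewrite mulmx1 (selmx_trmx F idK idK) mxrank1 /prinmx mulmx1 idmx_on_id => ->.
by congr (\rank (idmx_on F _)); apply/setP=> i; rewrite inE.
Qed.

Lemma mxrank_prinmx_le (F : fieldType) n (A : 'M[F]_n) (S : {set 'I_n}) :
  (\rank (prinmx A S) <= #|S|)%N.
Proof. by rewrite -(mxrank_idmx_on F) mxrankS ?sub_prinmx_idmx_on. Qed.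

Section KernelOnSupport.
Variables (F : fieldType) (n : nat).
Implicit Types (S : {set 'I_n}) (A B : 'M[F]_n) (x : 'rV[F]_n).

Definition kermx_on A S := (kermx (prinmx A S) :&: idmx_on F S)%MS.

Lemma sub_kermx_on A S x :
  (x <= kermx_on A S)%MS = (x *m prinmx A S == 0) && (x *m idmx_on F S == x).
Proof. by rewrite sub_capmx sub_kermx; congr andb; apply/sub_idmx_onP/eqP. Qed.

Lemma idmx_on0 : idmx_on F (set0 : {set 'I_n}) = 0.
Proof. by apply/matrixP=> i j; rewrite idmx_onE inE mxE. Qed.

Lemma mxrank_kermx_on A S : \rank (kermx_on A S) = (#|S| - \rank (prinmx A S))%N.
Proof.
have ker_full : \rank (kermx (prinmx A S) + idmx_on F S)%MS = n.
  apply/eqP; change (row_full (kermx (prinmx A S) + idmx_on F S)%MS).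
  rewrite -sub1mx -(idmx_onC F S) addrC addmx_sub_adds //.
  by apply/sub_kermxP; rewrite /prinmx !mulmxA idmx_onM setIC setICr idmx_on0 !mul0mx.
have := mxrank_sum_cap (kermx (prinmx A S)) (idmx_on F S).
have := mxrank_prinmx_le A S; have := max_card S; rewrite card_ord.
by rewrite /kermx_on ker_full mxrank_ker mxrank_idmx_on; lia.
Qed.

Lemma kermx_on_eq0 A S : (kermx_on A S == 0) = (\rank (prinmx A S) == #|S|).
Proof. by rewrite -mxrank_eq0 mxrank_kermx_on subn_eq0 eqn_leq mxrank_prinmx_le. Qed.

(* Scaled to x_v = 1, x B = 0 makes row v of B a combination of the other
   rows, and by symmetry likewise for column v: L := 1 - e_v x rebuilds B from
   the rows other than v, and L^T does the same for the columns. *)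
Lemma mxrank_prinmx_setC1 B x v : B^T = B -> x *m B = 0 -> x 0 v != 0 ->
  (\rank B <= \rank (prinmx B [set~ v]))%N.
Proof.
move=> symB; wlog xv1 : x / x 0 v = 1 => [lemma xB0 xv | xB0 _].
  have x'v : ((x 0 v)^-1 *: x) 0 v = 1 by rewrite mxE mulVf.
  apply: (lemma _ x'v); last by rewrite x'v oner_neq0.
  by rewrite -scalemxAl xB0 scaler0.
set P := idmx_on F [set~ v]; set L := 1%:M - delta_mx v 0 *m x.
have xP : x *m P = x - delta_mx 0 v.
  apply/rowP=> j; rewrite mul_mx_idmx_on !mxE !inE.
  by case: eqP => [-> | _]; rewrite ?xv1 ?subrr ?subr0.
have P_delta : P + delta_mx v v = 1%:M.
  rewrite -(idmx_onC F [set~ v]) setCK; congr (_ + _).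
  by apply/matrixP=> i j; rewrite idmx_onE !mxE inE; case: eqP => // ->; rewrite eq_sym.
have LPB : L *m (P *m B) = B.
  rewrite mulmxBl mul1mx -mulmxA (mulmxA x) xP mulmxBl xB0 sub0r mulmxN.
  by rewrite mulmxA mul_delta_mx opprK -mulmxDl P_delta mul1mx.
have BP : B *m P = L *m prinmx B [set~ v] by rewrite /prinmx !mulmxA -(mulmxA L) LPB.
have B_BPL : B = B *m P *m L^T.
  by rewrite -{1}symB -{1}LPB !trmx_mul symB tr_idmx_on.
by rewrite {1}B_BPL BP (leq_trans (mxrankM_maxl _ _)) // mxrankM_maxr.
Qed.

Lemma mxrank_prinmxD1 A S x v : A^T = A -> (x <= kermx_on A S)%MS -> x 0 v != 0 ->
  v \in S /\ \rank (prinmx A (S :\ v)) = \rank (prinmx A S).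
Proof.
move=> symA; rewrite sub_kermx_on => /andP[/eqP xB /eqP xD] xv.
have vS : v \in S by move: xv; rewrite -xD mul_mx_idmx_on; case: (v \in S); rewrite ?eqxx.
split=> //; apply/eqP; rewrite eqn_leq mxrank_prinmxS ?subD1set //=.
have -> : S :\ v = [set~ v] :&: S by apply/setP=> i; rewrite !inE.
by rewrite -prinmx_prinmx (mxrank_prinmx_setC1 _ xB) ?trmx_prinmx ?symA.
Qed.

Lemma exists_prinmxD1_rank_eq A S : A^T = A -> (\rank (prinmx A S) < #|S|)%N ->
  exists2 v, v \in S & \rank (prinmx A (S :\ v)) = \rank (prinmx A S).
Proof.
move=> symA; rewrite ltn_neqAle mxrank_prinmx_le andbT -kermx_on_eq0.
case/rowV0Pn=> x xK nz_x; have [v xv] : exists v, x 0 v != 0.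
  apply/existsP; apply: contraNT nz_x => /existsPn x0.
  by apply/eqP/rowP=> v; rewrite mxE; apply/eqP/negPn/x0.
by have [vS eq_rk] := mxrank_prinmxD1 symA xK xv; exists v.
Qed.

End KernelOnSupport.

Lemma trmx11 (R : Type) (M : 'M[R]_1) : M^T = M.
Proof. by apply/matrixP=> i j; rewrite !ord1 mxE. Qed.

(* Split A into its diagonal and N + N^T, N strictly upper triangular: the
   form y (N + N^T) y^T is twice y N y^T. *)
Lemma mxquad_pchar2 (R : comNzRingType) (pchar2 : 2 \in [pchar R]) n
    (A : 'M[R]_n) (y : 'rV[R]_n) :
  A^T = A -> y *m A *m y^T = (\sum_i A i i * y 0 i ^+ 2)%:M.
Proof.
move=> symA; set N : 'M[R]_n := \matrix_(i, j) ((i < j)%N%:R * A i j).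
have A_split : A = diag_mx (\row_i A i i) + (N + N^T).
  apply/matrixP=> i j; rewrite !mxE; case: ltngtP => [lt_ij | lt_ji | /val_inj ->].
  - by rewrite -val_eqE /= (ltn_eqF lt_ij) mulr0n mul1r mul0r add0r addr0.
  - rewrite -val_eqE /= (gtn_eqF lt_ji) mulr0n mul1r mul0r !add0r.
    by rewrite -[in RHS]symA mxE.
  - by rewrite eqxx mulr1n mul0r !addr0.
have yNy : y *m (N + N^T) *m y^T = 0.
  rewrite mulmxDr mulmxDl.
  have -> : y *m N^T *m y^T = (y *m N *m y^T)^T by rewrite !trmx_mul trmxK mulmxA.
  by rewrite trmx11; apply/matrixP=> i j; rewrite !mxE addrr_pchar2.
rewrite {1}A_split mulmxDr mulmxDl yNy addr0.
apply/matrixP=> i j; rewrite !ord1 !mxE eqxx mulr1n; apply: eq_bigr => k _.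
by rewrite mul_mx_diag !mxE mulrAC mulrC expr2.
Qed.

Section FullRankDeletion.
Variables (F : fieldType) (n : nat) (A : 'M[F]_n) (S : {set 'I_n}).
Hypotheses (symA : A^T = A) (fullA : \rank (prinmx A S) = #|S|).
Local Notation D := (idmx_on F S).
Local Notation B := (prinmx A S).

Lemma trmx_prinmx_sym : B^T = B.
Proof. by rewrite trmx_prinmx symA. Qed.

Lemma prinmx_inverse : exists Y : 'M[F]_n, [/\ Y *m B = D, prinmx Y S = Y & Y^T = Y].
Proof.
have /submxP[Y0 DY0] : (D <= B)%MS.
  by rewrite -(mxrank_leqif_sup (sub_prinmx_idmx_on A S)).2 fullA mxrank_idmx_on.
exists (prinmx Y0 S); set Y := prinmx Y0 S.
have YB : Y *m B = D.
  by rewrite /Y [prinmx Y0 S]/prinmx -!mulmxA idmx_on_prinmx -DY0 idmx_on_id.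
have PY : prinmx Y S = Y by rewrite /Y prinmx_prinmx setIid.
clearbody Y; split=> //.
have BYt : B *m Y^T = D by rewrite -trmx_prinmx_sym -trmx_mul YB tr_idmx_on.
have -> : Y = Y *m B *m Y^T by rewrite -mulmxA BYt -{2}PY prinmx_idmx_on.
by rewrite trmx_mul trmxK trmx_mul trmx_prinmx_sym mulmxA.
Qed.

Lemma row_idmx_on v : v \in S -> row v D = delta_mx 0 v.
Proof.
by move=> vS; apply/matrixP=> i j; rewrite [LHS]mxE idmx_onE vS mxE !ord1 eqxx eq_sym.
Qed.

(* A kernel vector x of B_(S - v) satisfies x B_S = c e_v, hence
   x = c (row v Y) and 0 = x_v = c Y_vv. *)
Lemma mxrank_prinmxD1_inverse Y v : Y *m B = D -> prinmx Y S = Y ->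
  v \in S -> Y v v != 0 -> \rank (prinmx A (S :\ v)) = #|S :\ v|.
Proof.
move=> YB PY vS Yvv; apply/eqP; rewrite -kermx_on_eq0; apply/rowV0P=> x.
rewrite sub_kermx_on => /andP[/eqP xB' /eqP xD'].
have xD : x *m D = x by rewrite -xD' -mulmxA idmx_onM (setIidPl (subD1set S v)).
set c := (x *m A) 0 v.
have xB : x *m B = c *: delta_mx 0 v.
  apply/matrixP=> i j; rewrite !ord1 /prinmx !mulmxA xD mul_mx_idmx_on.
  rewrite [RHS]mxE [in RHS]mxE.
  case: (eqVneq j v) => [-> | ne_jv]; first by rewrite vS eqxx mulr1.
  rewrite mulr0; case: ifP => // jS.
  have := congr1 (fun M : 'rV_n => M 0 j) xB'.
  by rewrite /prinmx !mulmxA xD' mul_mx_idmx_on !inE ne_jv jS [RHS]mxE.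
have x_rowY : x = c *: row v Y.
  have ker0 : kermx_on A S == 0 by rewrite kermx_on_eq0 fullA.
  apply/eqP; rewrite -subr_eq0; apply/eqP/(rowV0P ker0).
  rewrite sub_kermx_on !mulmxBl xB xD -!scalemxAl -!row_mul YB row_idmx_on //.
  have YD : Y *m D = Y by rewrite -PY prinmx_idmx_on.
  by rewrite YD !subrr !eqxx.
have := congr1 (fun M : 'rV_n => M 0 v) x_rowY.
have -> : x 0 v = 0 by rewrite -xD' mul_mx_idmx_on !inE eqxx.
rewrite !mxE => /esym/eqP; rewrite mulf_eq0 (negbTE Yvv) orbF => /eqP c0.
by rewrite x_rowY c0 scale0r.
Qed.

Hypotheses (pchar2 : 2 \in [pchar F]) (diagA : forall i, A i i = 1).

Lemma mxquad_unit_diag m (M : 'M[F]_(m, n)) j :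
  (M *m A *m M^T) j j = (\sum_i M j i) ^+ 2.
Proof.
have := congr1 (fun N : 'M_1 => N 0 0) (mxquad_pchar2 pchar2 (row j M) symA).
rewrite [in RHS]mxE eqxx mulr1n; under eq_bigr do rewrite diagA mul1r mxE.
rewrite -(pFrobenius_autE pchar2) rmorph_sum => <-.
rewrite !mxE; apply: eq_bigr => k _; rewrite !mxE; congr (_ * _).
by apply: eq_bigr => l _; rewrite !mxE.
Qed.

Lemma prinmx_inverse_diag_neq0 Y : S != set0 ->
  Y *m B = D -> prinmx Y S = Y -> Y^T = Y -> exists2 v, v \in S & Y v v != 0.
Proof.
case/set0Pn=> s sS YB PY symY; apply/exists_inP; apply: contraT => /exists_inPn Y0.
have YD : Y *m D = Y by rewrite -PY prinmx_idmx_on.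
have DY : D *m Y = Y by rewrite -PY idmx_on_prinmx.
have BY : B *m Y = D by rewrite -symY -trmx_prinmx_sym -trmx_mul YB tr_idmx_on.
have YAY : Y *m A *m Y^T = Y.
  have -> : Y *m A *m Y^T = Y *m B *m Y by rewrite /prinmx symY -{1}YD -{2}DY !mulmxA.
  by rewrite -mulmxA BY YD.
have row_sum0 j : \sum_i Y j i = 0.
  apply/eqP; suff : (\sum_i Y j i) ^+ 2 == 0 by rewrite expf_eq0.
  rewrite -mxquad_unit_diag YAY.
  case: (boolP (j \in S)) => [jS | jNS]; first exact/negPn/Y0.
  by rewrite -DY mul_idmx_on_mx (negbTE jNS).
have Y1 : Y *m const_mx 1 = 0 :> 'cV_n.
  apply/matrixP=> i k; rewrite !mxE -[RHS](row_sum0 i).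
  by apply: eq_bigr => l _; rewrite mxE mulr1.
have : (D *m const_mx 1 : 'cV_n) s 0 = 0 by rewrite -BY -mulmxA Y1 mulmx0 mxE.
by rewrite mul_idmx_on_mx sS mxE => /eqP; rewrite oner_eq0.
Qed.

Lemma exists_prinmxD1_full_rank : S != set0 ->
  exists2 v, v \in S & \rank (prinmx A (S :\ v)) = #|S :\ v|.
Proof.
move=> S0; have [Y [YB PY symY]] := prinmx_inverse.
have [v vS Yvv] := prinmx_inverse_diag_neq0 S0 YB PY symY.
by exists v; last exact: mxrank_prinmxD1_inverse YB PY vS Yvv.
Qed.

End FullRankDeletion.

Section DeletionOrder.
Variables (T : finType) (f : {set T} -> nat).
Hypothesis f_delete :
  forall S, S != set0 -> exists2 t, t \in S & f (S :\ t) = (f S - 1)%N.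

Lemma deletion_order (S : {set T}) : exists s : seq T,
  [/\ uniq s, {subset s <= S}, size s = #|S| &
      forall k, (k <= #|S|)%N -> f (S :\: [set x in take k s]) = (f S - k)%N].
Proof.
move: {2}#|S| (erefl #|S|) => m; elim: m S => [|m IHm] S cardS.
  exists [::]; split=> // k; rewrite cardS leqn0 => /eqP->.
  by rewrite take0 subn0; congr f; apply/setP=> x; rewrite !inE.
have [t tS f_t] : exists2 t, t \in S & f (S :\ t) = (f S - 1)%N.
  by apply: f_delete; rewrite -card_gt0 cardS.
have card_St : #|S :\ t| = m by move: cardS; rewrite (cardsD1 t) tS add1n => -[].
have [s [uniq_s sub_s size_s f_s]] := IHm _ card_St.
exists (t :: s); split.
- by rewrite /= uniq_s andbT; apply/negP=> /sub_s; rewrite !inE eqxx.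
- by move=> x; rewrite inE => /predU1P[-> // | /sub_s /setD1P[]].
- by rewrite /= size_s card_St cardS.
case=> [_ | k]; first by rewrite take0 subn0; congr f; apply/setP=> x; rewrite !inE.
rewrite cardS ltnS -card_St => le_k.
have -> : S :\: [set x in take k.+1 (t :: s)] = (S :\ t) :\: [set x in take k s].
  by apply/setP=> x; rewrite !inE negb_or; case: (x == t); rewrite ?andbF.
by rewrite f_s // f_t -subnDA add1n.
Qed.

End DeletionOrder.

Section ClosedAdjacency.
Variables (T : finType) (e : rel T).

Definition closed_adjmx : 'M['F_2]_#|T| :=
  \matrix_(i, j) (if (i == j) || e (enum_val i) (enum_val j) then 1 else 0).

Lemma closed_adjmx_sym : symmetric e -> closed_adjmx^T = closed_adjmx.
Proof. by move=> symE; apply/matrixP=> i j; rewrite !mxE eq_sym symE. Qed.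

Lemma closed_adjmx_diag i : closed_adjmx i i = 1.
Proof. by rewrite mxE eqxx. Qed.

Local Notation selmxT S := (selmx 'F_2 (@enum_val T T) S).

Lemma closed_adjE (S : {set T}) :
  closed_adj e S = selmxT S *m closed_adjmx *m (selmxT S)^T.
Proof.
apply/matrixP=> k l; rewrite [RHS]mxE.
under eq_bigr => j _ do rewrite [_^T j l]mxE mxE (selmx_sum enum_valK enum_rankK) mulrC.
rewrite (selmx_sum enum_valK enum_rankK) !mxE !enum_rankK.
by rewrite (inj_eq enum_rank_inj) (inj_eq enum_val_inj).
Qed.

Lemma nullityE (S : {set T}) :
  nullity e S = (#|S| - \rank (prinmx closed_adjmx (@enum_val T T @^-1: S)))%N.
Proof.
by rewrite /nullity mxrank_ker closed_adjE (mxrank_selmx_conj enum_valK enum_rankK).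
Qed.

Lemma card_preim_enum_val (S : {set T}) : #|@enum_val T T @^-1: S| = #|S|.
Proof. exact/on_card_preimset/onW_bij/enum_val_bij. Qed.

Lemma nullity_delete : symmetric e ->
  forall S, S != set0 -> exists2 t, t \in S & nullity e (S :\ t) = (nullity e S - 1)%N.
Proof.
move=> symE S S0; set S' := @enum_val T T @^-1: S.
have symA := closed_adjmx_sym symE.
have preimD1 v : @enum_val T T @^-1: (S :\ enum_val v) = S' :\ v.
  by apply/setP=> i; rewrite !inE (inj_eq enum_val_inj).
have := mxrank_prinmx_le closed_adjmx S'; rewrite leq_eqVlt => /orP[/eqP full | lt_rk].
  have S'0 : S' != set0 by rewrite -card_gt0 card_preim_enum_val card_gt0.
  have [v vS' rk_v] := exists_prinmxD1_full_rank symA full (pchar_Fp (isT : prime 2))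
    closed_adjmx_diag S'0.
  exists (enum_val v); first by rewrite inE in vS'.
  by rewrite !nullityE preimD1 rk_v -preimD1 full !card_preim_enum_val !subnn.
have [v vS' rk_v] := exists_prinmxD1_rank_eq symA lt_rk.
have tS : enum_val v \in S by rewrite inE in vS'.
exists (enum_val v) => //; rewrite !nullityE preimD1 rk_v.
rewrite card_preim_enum_val in lt_rk.
by move: lt_rk; rewrite -/S' [#|S|](cardsD1 (enum_val v)) tS add1n; lia.
Qed.

End ClosedAdjacency.

Theorem theorem2p8 (T : finType) (e : rel T) :
  simple_graph e ->
  exists s : seq T,
    [/\ uniq s, size s = #|T|,
        (forall k, (k <= #|T|)%N -> (k < nullity e [set: T])%N ->
           nullity e (remaining s k) = (nullity e [set: T] - k)%N)
      & (forall k, (k <= #|T|)%N -> (nullity e [set: T] <= k)%N ->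
           nullity e (remaining s k) = 0%N)].
Proof.
case=> symE _.
have [s [uniq_s _ size_s nullity_s]] := deletion_order (nullity_delete symE) [set: T].
have remainingE k : remaining s k = [set: T] :\: [set x in take k s].
  by apply/setP=> x; rewrite !inE andbT.
rewrite cardsT in size_s nullity_s.
exists s; split=> // k le_kT => [_ | le_nk]; rewrite remainingE nullity_s //.
by apply/eqP; rewrite subn_eq0.
Qed.
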